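(* In the setting of the context, the involute $N$ (the closed polygonal curve formed by the segments $N_{i-\frac12}N_{i+\frac12}$), together with the region $\overline N$ bounded by it, is contained in the region $\overline M$ bounded by the central equidistant $M$.
   Context: $[x,y]$ denotes the determinant of the matrix with columns $x,y\in\mathbb{R}^2$. Fix $n\ge2$; indices (integer and half-integer) are read modulo $2n$. $U$ is a convex $2n$-gon with distinct vertices $U_1,\dots,U_{2n}$ in counterclockwise order with $U_{i+n}=-U_i$, and $V_{i+\frac12}=(U_{i+1}-U_i)/[U_i,U_{i+1}]$. Let $c>0$ and let $P$ be a convex polygon with nonempty interior and vertex list $P_1,\dots,P_{2n}$ (listed counterclockwise, consecutive entries may coincide) with $P_{i+1}-P_i$ a nonnegative multiple of $V_{i+\frac12}$ and $P_i-P_{i+n}=2cU_i$ for all $i$. The central equidistant $M$ is the closed polygonal curve with vertices $M_i=\frac12(P_i+P_{i+n})$; define $\alpha_{i+\frac12}$ by $M_{i+1}-M_i=\alpha_{i+\frac12}(U_{i+1}-U_i)$, $\beta_i=\frac12\sum_{j=i}^{i+n-1}\alpha_{j+\frac12}[U_j,U_{j+1}]$, and the involute $N_{i+\frac12}=M_i+\beta_iV_{i+\frac12}$. For a closed polygonal curve $X$, its exterior is the set of points of the plane that can be joined to a point of (the boundary curve of) $P$ by a continuous path not meeting $X$, and the region $\overline X$ bounded by $X$ is the complement of the exterior. *)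

From Stdlib Require Import Reals Lra Arith.
Open Scope R_scope.

Definition pt := (R * R)%type.
Definition padd (p q : pt) : pt := (fst p + fst q, snd p + snd q).
Definition psub (p q : pt) : pt := (fst p - fst q, snd p - snd q).
Definition pscale (a : R) (p : pt) : pt := (a * fst p, a * snd p).
(* [x,y] : determinant of the matrix with columns x, y *)
Definition det (p q : pt) : R := fst p * snd q - snd p * fst q.

Definition segment (a b : pt) (x : pt) : Prop :=
  exists t, 0 <= t <= 1 /\ x = padd (pscale (1 - t) a) (pscale t b).

(* closed polygonal curve with vertices X 0, ..., X (m-1) (X periodic of period m):
   union of the segments [X i, X (i+1)], i < m *)
Definition polycurve (m : nat) (X : nat -> pt) (x : pt) : Prop :=
  exists i, (i < m)%nat /\ segment (X i) (X (S i)) x.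

(* continuous path in the plane (parametrised on R; only [0,1] matters) *)
Definition is_path (g : R -> pt) : Prop :=
  continuity (fun t => fst (g t)) /\ continuity (fun t => snd (g t)).

(* exterior of the curve X relative to the reference curve B (boundary of P):
   points joinable to a point of B by a continuous path not meeting X *)
Definition exterior (X B : pt -> Prop) (x : pt) : Prop :=
  exists g : R -> pt, is_path g /\ g 0 = x /\ B (g 1) /\
    (forall t, 0 <= t <= 1 -> ~ X (g t)).

Definition region (X B : pt -> Prop) (x : pt) : Prop := ~ exterior X B x.

(* Index conventions: all sequences are indexed by nat and 2n-periodic.
   V i stands for V_{i+1/2}, alpha i for alpha_{i+1/2}, Npt i for N_{i+1/2}. *)
Definition Vdir (U : nat -> pt) (i : nat) : pt :=
  pscale (/ det (U i) (U (S i))) (psub (U (S i)) (U i)).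

Definition Mpt (n : nat) (P : nat -> pt) (i : nat) : pt :=
  pscale (1 / 2) (padd (P i) (P (i + n)%nat)).

Fixpoint rsum (f : nat -> R) (k : nat) : R :=
  match k with O => 0 | S k' => rsum f k' + f k' end.

Definition beta (n : nat) (U : nat -> pt) (alpha : nat -> R) (i : nat) : R :=
  / 2 * rsum (fun k => alpha (i + k)%nat * det (U (i + k)%nat) (U (S (i + k)))) n.

Definition Npt (n : nat) (U P : nat -> pt) (alpha : nat -> R) (i : nat) : pt :=
  padd (Mpt n P i) (pscale (beta n U alpha i) (Vdir U i)).

From Stdlib Require Import Reals Lra Lia Psatz Classical.
Open Scope R_scope.

(* For [x] off [M], let [s_k(x)] be the sign of [[V_{k+1/2}, x - M_k]], i.e. the
   side of [x] with respect to the line carrying the edge [M_k M_{k+1}]; central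
   symmetry gives [s_{k+n} = - s_k].  The sign index [F(x) = sum_k s_k s_{k+1}] is
   locally constant off [M]: a sign can only vanish in isolation, between
   neighbours of opposite signs, which leaves [F] unchanged.  Hence [F] is constant
   along any path avoiding [M].  On the boundary of [P] one half-period of signs is
   negative, so [F = 2n - 4].  A point [x] of the edge [N_{m-1/2} N_{m+1/2}]
   satisfies [[U_m, x - M_m] = beta_m], so the positively weighted sum
   [sum_{k<n} [U_{m+k}, U_{m+k+1}] [V_{m+k}, x - M_{m+k}] = 2 (beta_m - [U_m, x - M_m])]
   vanishes; this forces three sign changes in a half period, so [F <= 2n - 6]
   when [x] is off [M].  So no path from a point of [N] or of its region to the
   boundary of [P] avoids [M]. *)

(** * Periodic sequences and finite sums *)

Definition periodic {A : Type} (N : nat) (f : nat -> A) : Prop :=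
  forall k, f (k + N)%nat = f k.

Lemma periodic_mul_add {A : Type} N (f : nat -> A) :
  periodic N f -> forall q r, f (q * N + r)%nat = f r.
Proof.
  intros Hf q r; induction q as [|q IH]; [reflexivity|].
  rewrite <- IH, <- (Hf (q * N + r)%nat). f_equal. simpl. lia.
Qed.

Lemma periodic_mod {A : Type} N (f : nat -> A) :
  (N > 0)%nat -> periodic N f -> forall k, f k = f (k mod N).
Proof.
  intros HN Hf k. rewrite (Nat.div_mod_eq k N) at 1. rewrite Nat.mul_comm.
  apply periodic_mul_add; assumption.
Qed.

Lemma rsum_ext (f g : nat -> R) m :
  (forall k, (k < m)%nat -> f k = g k) -> rsum f m = rsum g m.
Proof.
  induction m as [|m IH]; intros H; simpl; [reflexivity|].
  rewrite IH by (intros k Hk; apply H; lia). rewrite H by lia. reflexivity.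
Qed.

Lemma rsum_plus f g m : rsum (fun k => f k + g k) m = rsum f m + rsum g m.
Proof. induction m as [|m IH]; simpl; [ring|]. rewrite IH; ring. Qed.

Lemma rsum_scal c f m : rsum (fun k => c * f k) m = c * rsum f m.
Proof. induction m as [|m IH]; simpl; [ring|]. rewrite IH; ring. Qed.

Lemma rsum_const c m : rsum (fun _ => c) m = INR m * c.
Proof. induction m as [|m IH]; [simpl; ring|]. rewrite S_INR. simpl. rewrite IH. ring. Qed.

Lemma rsum_le f g m : (forall k, (k < m)%nat -> f k <= g k) -> rsum f m <= rsum g m.
Proof.
  induction m as [|m IH]; intros H; simpl; [lra|].
  assert (rsum f m <= rsum g m) by (apply IH; intros; apply H; lia).
  assert (f m <= g m) by (apply H; lia). lra.
Qed.

Lemma rsum_nonneg f m : (forall k, (k < m)%nat -> 0 <= f k) -> 0 <= rsum f m.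
Proof.
  intros H. replace 0 with (rsum (fun _ => 0) m) by (rewrite rsum_const; ring).
  apply rsum_le; assumption.
Qed.

Lemma rsum_ge_term f m k :
  (forall k, (k < m)%nat -> 0 <= f k) -> (k < m)%nat -> f k <= rsum f m.
Proof.
  induction m as [|m IH]; intros H Hk; [lia|]. simpl.
  destruct (Nat.eq_dec k m) as [->|Hkm].
  - assert (0 <= rsum f m) by (apply rsum_nonneg; intros; apply H; lia). lra.
  - assert (f k <= rsum f m) by (apply IH; [intros; apply H|]; lia).
    assert (0 <= f m) by (apply H; lia). lra.
Qed.

Lemma rsum_shift f m : rsum f (S m) = f 0%nat + rsum (fun k => f (S k)) m.
Proof.
  induction m as [|m IH]; [simpl; ring|].
  change (rsum f (S (S m))) with (rsum f (S m) + f (S m)). rewrite IH. simpl. ring.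
Qed.

Lemma rsum_split f a b : rsum f (a + b) = rsum f a + rsum (fun k => f (a + k)%nat) b.
Proof.
  induction b as [|b IH]; simpl; [rewrite Nat.add_0_r; ring|].
  rewrite Nat.add_succ_r. simpl. rewrite IH. ring.
Qed.

Lemma rsum_rot f N : periodic N f -> forall p, rsum (fun k => f (p + k)%nat) N = rsum f N.
Proof.
  intros Hf p; induction p as [|p IH]; [reflexivity|]. rewrite <- IH.
  set (g := fun k => f (p + k)%nat).
  assert (E : rsum g (S N) = g 0%nat + rsum (fun k => g (S k)) N) by apply rsum_shift.
  assert (Eg : g N = g 0%nat) by (unfold g; rewrite Nat.add_0_r; apply (Hf p)).
  change (rsum g (S N)) with (rsum g N + g N) in E.
  transitivity (rsum (fun k => g (S k)) N); [apply rsum_ext; intros; unfold g; f_equal; lia | lra].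
Qed.

Lemma exists_sign_of_weighted_sum_zero (w f : nat -> R) m k0 eps :
  (forall k, (k < m)%nat -> w k > 0) -> rsum (fun k => w k * f k) m = 0 ->
  (k0 < m)%nat -> eps * f k0 < 0 -> exists k, (k < m)%nat /\ eps * f k > 0.
Proof.
  intros Hw Hsum Hk0 Hf0. apply NNPP. intros Hnone.
  assert (Hnonneg : forall k, (k < m)%nat -> 0 <= - eps * (w k * f k)).
  { intros k Hk. destruct (Rle_dec (eps * f k) 0) as [Hle|Hgt].
    - assert (w k > 0) by (apply Hw, Hk). nra.
    - exfalso. apply Hnone. exists k. split; [exact Hk | lra]. }
  assert (T := rsum_ge_term (fun k => - eps * (w k * f k)) m k0 Hnonneg Hk0).
  rewrite rsum_scal, Hsum in T. assert (w k0 > 0) by (apply Hw, Hk0). nra.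
Qed.

Definition sgn (r : R) : R := if Rlt_dec 0 r then 1 else if Rlt_dec r 0 then -1 else 0.

Lemma sgn_cases r :
  (0 < r /\ sgn r = 1) \/ (r < 0 /\ sgn r = -1) \/ (r = 0 /\ sgn r = 0).
Proof.
  unfold sgn. destruct (Rlt_dec 0 r); [left; lra|].
  destruct (Rlt_dec r 0); [right; left; lra | right; right; lra].
Qed.

Lemma sgn_pos r : 0 < r -> sgn r = 1.
Proof. destruct (sgn_cases r) as [[? ?]|[[? ?]|[? ?]]]; lra. Qed.

Lemma sgn_neg r : r < 0 -> sgn r = -1.
Proof. destruct (sgn_cases r) as [[? ?]|[[? ?]|[? ?]]]; lra. Qed.

Lemma sgn_0 r : r = 0 -> sgn r = 0.
Proof. destruct (sgn_cases r) as [[? ?]|[[? ?]|[? ?]]]; lra. Qed.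

Lemma sgn_values r : sgn r = 1 \/ sgn r = -1 \/ sgn r = 0.
Proof. destruct (sgn_cases r) as [[? ?]|[[? ?]|[? ?]]]; auto. Qed.

Lemma sgn_opp r : sgn (- r) = - sgn r.
Proof.
  destruct (sgn_cases r) as [[? ->]|[[? ->]|[? ->]]];
    [rewrite sgn_neg | rewrite sgn_pos | rewrite sgn_0]; lra.
Qed.

Lemma sgn_eq_of_mul_pos a b : a * b > 0 -> sgn a = sgn b.
Proof.
  destruct (sgn_cases a) as [[? ->]|[[? ->]|[? ->]]];
    destruct (sgn_cases b) as [[? ->]|[[? ->]|[? ->]]]; nra.
Qed.

Lemma sgn_add_of_mul_neg a b : a * b < 0 -> sgn a + sgn b = 0.
Proof.
  destruct (sgn_cases a) as [[? ->]|[[? ->]|[? ->]]];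
    destruct (sgn_cases b) as [[? ->]|[[? ->]|[? ->]]]; nra.
Qed.

Lemma sgn_mul_neg a b : a * b < 0 -> sgn a * sgn b < 0.
Proof.
  destruct (sgn_cases a) as [[? ->]|[[? ->]|[? ->]]];
    destruct (sgn_cases b) as [[? ->]|[[? ->]|[? ->]]]; nra.
Qed.

Definition clamp (a b t : R) : R := Rmax a (Rmin b t).

Lemma clamp_in a b t : a <= b -> a <= clamp a b t <= b.
Proof. unfold clamp, Rmax, Rmin; intros; repeat destruct Rle_dec; lra. Qed.

Lemma clamp_id a b t : a <= t <= b -> clamp a b t = t.
Proof. unfold clamp, Rmax, Rmin; intros; repeat destruct Rle_dec; lra. Qed.

Lemma clamp_lipschitz a b s t : a <= b -> Rabs (clamp a b s - clamp a b t) <= Rabs (s - t).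
Proof.
  unfold clamp, Rmax, Rmin, Rabs; intros; repeat destruct Rle_dec; repeat destruct Rcase_abs; lra.
Qed.

Lemma continuity_pt_locally_constant (f : R -> R) t :
  (exists d, d > 0 /\ forall s, Rabs (s - t) < d -> f s = f t) -> continuity_pt f t.
Proof.
  intros [d [Hd H]] eps Heps. exists d; split; [exact Hd|].
  intros x [_ Hx]. simpl in *. unfold R_dist in *.
  rewrite H, Rminus_diag, Rabs_R0 by exact Hx. exact Heps.
Qed.

(* If [phi a <> phi b], the indicator of [phi = phi a], precomposed with the
   clamp to [a,b], would be continuous with values of both signs: the IVT fails. *)
Lemma locally_constant_endpoints (phi : R -> R) a b : a <= b ->
  (forall t, a <= t <= b -> exists d, d > 0 /\
     forall s, a <= s <= b -> Rabs (s - t) < d -> phi s = phi t) ->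
  phi a = phi b.
Proof.
  intros Hab H. destruct (Req_dec a b) as [->|Hab']; [reflexivity|].
  destruct (Req_dec (phi b) (phi a)) as [E|E]; [symmetry; exact E|exfalso].
  set (chi := fun t => (if Req_EM_T (phi (clamp a b t)) (phi a) then 0 else 1) - / 2).
  assert (Hchi : continuity chi).
  { intros t. apply continuity_pt_locally_constant.
    destruct (H (clamp a b t) (clamp_in a b t Hab)) as [d [Hd Hloc]].
    exists d; split; [exact Hd|]. intros s Hs. unfold chi.
    rewrite (Hloc (clamp a b s)); [reflexivity | apply clamp_in, Hab |].
    eapply Rle_lt_trans; [apply clamp_lipschitz, Hab | exact Hs]. }
  assert (Ha : chi a < 0).
  { unfold chi. rewrite clamp_id by lra. destruct Req_EM_T; [lra | congruence]. }
  assert (Hb : 0 < chi b).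
  { unfold chi. rewrite clamp_id by lra. destruct Req_EM_T; [congruence | lra]. }
  destruct (IVT chi a b Hchi ltac:(lra) Ha Hb) as [z [_ Hz]].
  unfold chi in Hz. destruct Req_EM_T; lra.
Qed.

Lemma continuity_pt_same_sign (f : R -> R) t : continuity_pt f t -> f t <> 0 ->
  exists d, d > 0 /\ forall s, Rabs (s - t) < d -> f s * f t > 0.
Proof.
  intros Hc Hf. destruct (Hc (Rabs (f t)) (Rabs_pos_lt _ Hf)) as [d [Hd H]].
  exists d; split; [exact Hd|]. intros s Hs.
  destruct (Req_dec s t) as [->|Hst]; [nra|].
  assert (Hd' := H s (conj (conj I (not_eq_sym Hst)) Hs)). simpl in Hd'. unfold R_dist in Hd'.
  revert Hd'. unfold Rabs; repeat destruct Rcase_abs; intros; nra.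
Qed.

Lemma near_forall_lt (Q : nat -> R -> Prop) t m :
  (forall k, (k < m)%nat -> exists d, d > 0 /\ forall s, Rabs (s - t) < d -> Q k s) ->
  exists d, d > 0 /\ forall s, Rabs (s - t) < d -> forall k, (k < m)%nat -> Q k s.
Proof.
  induction m as [|m IH]; intros H.
  - exists 1; split; [lra|]. intros; lia.
  - destruct IH as [d1 [Hd1 H1]]; [intros; apply H; lia|].
    destruct (H m (Nat.lt_succ_diag_r m)) as [d2 [Hd2 H2]].
    exists (Rmin d1 d2); split; [apply Rmin_pos; assumption|].
    intros s Hs k Hk. destruct (Nat.eq_dec k m) as [->|Hkm].
    + apply H2. eapply Rlt_le_trans; [exact Hs | apply Rmin_r].
    + apply H1; [eapply Rlt_le_trans; [exact Hs | apply Rmin_l] | lia].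
Qed.

(** * Sums of products of consecutive signs *)

(* [b_k b_{k+1} - a_k a_{k+1} = e_k a_{k+1} + a_k e_{k+1}] with [e = b - a], since
   [e_k e_{k+1} = 0]; after a cyclic shift the sum of the right-hand sides is
   [sum_k e_k (a_{k-1} + a_{k+1}) = 0]. *)
Lemma cyclic_products_isolated_zeros (N : nat) (a b : nat -> R) : (N >= 1)%nat ->
  periodic N a -> periodic N b ->
  (forall k, (k < N)%nat -> b k = a k \/
     (a k = 0 /\ a (k + (N - 1))%nat + a (S k) = 0 /\ b (S k) = a (S k))) ->
  rsum (fun k => b k * b (S k)) N = rsum (fun k => a k * a (S k)) N.
Proof.
  intros HN Ha Hb H. set (e := fun k => b k - a k).
  assert (Hsplit : rsum (fun k => b k * b (S k)) N = rsum (fun k => a k * a (S k)) N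
            + rsum (fun k => e k * a (S k)) N + rsum (fun k => a k * e (S k)) N).
  { rewrite <- !rsum_plus. apply rsum_ext. intros k Hk. unfold e.
    destruct (H k Hk) as [E|[_ [_ E]]]; rewrite E; ring. }
  assert (Hshift : rsum (fun k => a k * e (S k)) N = rsum (fun k => a (k + (N - 1))%nat * e k) N).
  { rewrite <- (rsum_rot (fun k => a (k + (N - 1))%nat * e k) N) with (p := 1%nat).
    - apply rsum_ext. intros k _. replace (1 + k + (N - 1))%nat with (k + N)%nat by lia.
      rewrite Ha. reflexivity.
    - intros k. unfold e. replace (k + N + (N - 1))%nat with (k + (N - 1) + N)%nat by lia.
      rewrite Ha, Ha, Hb. reflexivity. }
  assert (Hzero : rsum (fun k => e k * a (S k)) N
                  + rsum (fun k => a (k + (N - 1))%nat * e k) N = 0).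
  { rewrite <- rsum_plus. transitivity (rsum (fun _ => 0) N); [|rewrite rsum_const; ring].
    apply rsum_ext. intros k Hk. unfold e.
    destruct (H k Hk) as [E|[_ [E _]]]; [rewrite E; ring|].
    transitivity ((b k - a k) * (a (k + (N - 1))%nat + a (S k))); [ring|]. rewrite E; ring. }
  lra.
Qed.

Lemma rsum_sign_products_opposite_ends (s : nat -> R) :
  (forall k, s k = 1 \/ s k = -1 \/ s k = 0) ->
  forall len a, s a * s (a + len)%nat < 0 ->
  rsum (fun m => s (a + m)%nat * s (S (a + m))) len <= INR len - 1.
Proof.
  intros Hs.
  assert (Hle : forall k, s k * s (S k) <= 1).
  { intros k. destruct (Hs k) as [->|[->| ->]]; destruct (Hs (S k)) as [->|[->| ->]]; lra. }
  induction len as [|len IH]; intros a H; [rewrite Nat.add_0_r in H; nra|].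
  rewrite rsum_shift, S_INR, Nat.add_0_r.
  replace (rsum (fun k => s (a + S k)%nat * s (S (a + S k))) len)
    with (rsum (fun m => s (S a + m)%nat * s (S (S a + m))) len)
    by (apply rsum_ext; intros; rewrite Nat.add_succ_comm; reflexivity).
  destruct (Req_dec (s a * s (S a)) 1) as [E|E].
  - assert (Ea : s a = s (S a)).
    { destruct (Hs a) as [e|[e|e]]; destruct (Hs (S a)) as [e'|[e'|e']]; rewrite e, e' in *; lra. }
    assert (IH' := IH (S a)). rewrite <- Ea, Nat.add_succ_comm in IH'.
    specialize (IH' H). lra.
  - assert (s a * s (S a) <= 0).
    { destruct (Hs a) as [e|[e|e]]; destruct (Hs (S a)) as [e'|[e'|e']]; rewrite e, e' in *; lra. }
    assert (rsum (fun m => s (S a + m)%nat * s (S (S a + m))) len <= rsum (fun _ => 1) len)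
      by (apply rsum_le; intros; apply Hle).
    rewrite rsum_const in *. lra.
Qed.

Lemma rsum_arcs (f : nat -> R) p q r : (p <= q)%nat -> (q <= r)%nat ->
  rsum (fun k => f (p + k)%nat) (r - p)
  = rsum (fun k => f (p + k)%nat) (q - p) + rsum (fun k => f (q + k)%nat) (r - q).
Proof.
  intros Hpq Hqr. replace (r - p)%nat with ((q - p) + (r - q))%nat by lia.
  rewrite rsum_split. f_equal. apply rsum_ext. intros. f_equal. lia.
Qed.

Lemma rsum_sign_products_arc (s : nat -> R) p q :
  (forall k, s k = 1 \/ s k = -1 \/ s k = 0) -> (p <= q)%nat -> s p * s q < 0 ->
  rsum (fun k => s (p + k)%nat * s (S (p + k))) (q - p) <= INR (q - p) - 1.
Proof.
  intros Hs Hpq H. apply rsum_sign_products_opposite_ends; [exact Hs|].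
  replace (p + (q - p))%nat with q by lia. exact H.
Qed.

Lemma rsum_sign_products_block (s : nat -> R) j e len : (len >= 1)%nat ->
  e * e = 1 -> (forall d, (d < len)%nat -> s (j + d)%nat = e) -> s (j + len)%nat = - e ->
  rsum (fun k => s (j + k)%nat * s (S (j + k))) len = INR len - 2.
Proof.
  intros Hlen He Hin Hout. destruct len as [|l]; [lia|]. cbn [rsum].
  rewrite (rsum_ext _ (fun _ => 1)), rsum_const, S_INR.
  - rewrite <- Nat.add_succ_r, Hout, Hin by lia. lra.
  - intros k Hk. rewrite <- Nat.add_succ_r, !Hin by lia. exact He.
Qed.

Section AntiperiodicSigns.
Variables (n : nat) (s : nat -> R).
Hypothesis s_values : forall k, s k = 1 \/ s k = -1 \/ s k = 0.
Hypothesis s_periodic : periodic (2 * n) s.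
Hypothesis s_antiperiodic : forall k, s (k + n)%nat = - s k.

Let sign_products := rsum (fun k => s k * s (S k)) (2 * n).

Lemma sign_products_from p :
  sign_products = rsum (fun k => s (p + k)%nat * s (S (p + k))) (p + 2 * n - p).
Proof.
  unfold sign_products. replace (p + 2 * n - p)%nat with (2 * n)%nat by lia.
  symmetry. apply (rsum_rot (fun k => s k * s (S k))).
  intros k. rewrite s_periodic, <- (s_periodic (S k)). reflexivity.
Qed.

(* The six arcs [p,q], [q,r], [r,p+n] and their translates by [n] each join
   opposite signs, so each sum of products over an arc falls short of its
   length by at least [1]. *)
Lemma sign_products_three_changes p q r : (p < q)%nat -> (q < r)%nat -> (r < p + n)%nat ->
  s p * s q < 0 -> s q * s r < 0 -> sign_products <= INR (2 * n) - 6.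
Proof.
  intros Hpq Hqr Hrp Hspq Hsqr.
  assert (Hspr : s p * s r > 0) by nra.
  assert (Arc := fun a b Hab H => rsum_sign_products_arc s a b s_values Hab H).
  assert (A1 := Arc p q ltac:(lia) Hspq).
  assert (A2 := Arc q r ltac:(lia) Hsqr).
  assert (A3 := Arc r (p + n)%nat ltac:(lia) ltac:(rewrite s_antiperiodic; nra)).
  assert (A4 := Arc (p + n)%nat (q + n)%nat ltac:(lia) ltac:(rewrite !s_antiperiodic; nra)).
  assert (A5 := Arc (q + n)%nat (r + n)%nat ltac:(lia) ltac:(rewrite !s_antiperiodic; nra)).
  assert (A6 := Arc (r + n)%nat (p + 2 * n)%nat ltac:(lia)
                  ltac:(rewrite s_periodic, s_antiperiodic; nra)).
  rewrite (sign_products_from p). pose (f := fun k => s k * s (S k)).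
  rewrite (rsum_arcs f p q), (rsum_arcs f q r), (rsum_arcs f r (p + n)),
    (rsum_arcs f (p + n) (q + n)), (rsum_arcs f (q + n) (r + n)) by lia.
  unfold f; cbv beta.
  assert (INR (q - p) + INR (r - q) + INR (p + n - r) + INR (q + n - (p + n))
          + INR (r + n - (q + n)) + INR (p + 2 * n - (r + n)) = INR (2 * n))
    by (rewrite <- !plus_INR; f_equal; lia).
  lra.
Qed.

Lemma sign_products_half_block j : (1 <= n)%nat ->
  (forall d, (d < n)%nat -> s (j + d)%nat = -1) -> sign_products = INR (2 * n) - 4.
Proof.
  intros Hn Hneg. rewrite (sign_products_from j).
  rewrite (rsum_arcs (fun k => s k * s (S k)) j (j + n)) by lia.
  replace (j + n - j)%nat with n by lia.
  replace (j + 2 * n - (j + n))%nat with n by lia.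
  rewrite (rsum_sign_products_block s j (-1) n), (rsum_sign_products_block s (j + n) 1 n);
    try lia; try lra.
  - rewrite mult_INR. simpl. lra.
  - intros d Hd. replace (j + n + d)%nat with (j + d + n)%nat by lia.
    rewrite s_antiperiodic, Hneg by lia. lra.
  - replace (j + n + n)%nat with (j + 2 * n)%nat by lia. rewrite s_periodic.
    rewrite <- (Nat.add_0_r j), Hneg by lia. reflexivity.
  - intros d Hd. apply Hneg, Hd.
  - rewrite s_antiperiodic, <- (Nat.add_0_r j), Hneg by lia. lra.
Qed.

End AntiperiodicSigns.

(** * Plane geometry *)

Definition antiperiodic (n : nat) (X : nat -> pt) : Prop :=
  forall k, X (k + n)%nat = pscale (-1) (X k).

Definition ccw_convex (N : nat) (X : nat -> pt) : Prop :=
  forall k d, (2 <= d <= N - 1)%nat ->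
    det (psub (X (S k)) (X k)) (psub (X (k + d)%nat) (X k)) > 0.

Definition vdir (A B : pt) : pt := pscale (/ det A B) (psub B A).

Lemma det_pos_of_antipode_left (A B : pt) :
  det (psub B A) (psub (pscale (-1) A) A) > 0 -> det A B > 0.
Proof. destruct A as [a1 a2], B as [b1 b2]; unfold det, psub, pscale; simpl; intros; nra. Qed.

(* Cramer: [det C D * A = det A D * C + det C A * D].  If [det A D <= 0], pairing
   with the edge [A B] contradicts the positions of [0], [- C] and [- D]. *)
Lemma det_pos_convex_step (A B C D : pt) : det A C > 0 -> det C D > 0 -> det A B > 0 ->
  det (psub D C) (psub (pscale (-1) A) C) > 0 ->
  det (psub B A) (psub (pscale (-1) C) A) > 0 ->
  det (psub B A) (psub (pscale (-1) D) A) > 0 -> det A D > 0.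
Proof.
  destruct A as [a1 a2], B as [b1 b2], C as [c1 c2], D as [d1 d2].
  unfold det, psub, pscale; simpl. intros hAC hCD hAB hD hC hDm.
  destruct (Rlt_le_dec 0 (a1 * d2 - a2 * d1)) as [|Hc]; [lra|exfalso].
  set (al := d1 * a2 - d2 * a1) in *. set (be := a1 * c2 - a2 * c1) in *.
  set (de := c1 * d2 - c2 * d1) in *.
  assert (Hd : de - al - be > 0).
  { assert (0 < de * (de - al - be)); [|nra].
    replace (de * (de - al - be))
      with (de * ((d1 - c1) * (-1 * a2 - c2) - (d2 - c2) * (-1 * a1 - c1)))
      by (unfold al, be, de; ring).
    apply Rmult_lt_0_compat; lra. }
  set (o := (b1 - a1) * a2 - (b2 - a2) * a1) in *.
  set (oc := (b1 - a1) * (-1 * c2) - (b2 - a2) * (-1 * c1)) in *.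
  set (od := (b1 - a1) * (-1 * d2) - (b2 - a2) * (-1 * d1)) in *.
  assert (E : de * o = al * oc + be * od) by (unfold de, o, al, oc, be, od; ring).
  assert (0 <= al) by (unfold al; lra). assert (o < 0) by (unfold o; lra).
  assert (oc - o > 0) by (unfold oc, o; lra). assert (od - o > 0) by (unfold od, o; lra).
  assert (0 <= al * (oc - o)) by nra. assert (0 < be * (od - o)) by nra.
  assert (0 < (de - al - be) * (- o)) by nra.
  nra.
Qed.

Lemma antiperiodic_ccw_convex_det_pos n (X : nat -> pt) :
  (2 <= n)%nat -> antiperiodic n X -> ccw_convex (2 * n) X ->
  forall i d, (1 <= d <= n - 1)%nat -> det (X i) (X (i + d)%nat) > 0.
Proof.
  intros Hn Hanti Hconv.
  assert (Hedge : forall k, det (X k) (X (S k)) > 0).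
  { intros k. apply det_pos_of_antipode_left. rewrite <- Hanti. apply Hconv. lia. }
  intros i d Hd. induction d as [|d IH]; [lia|].
  destruct (Nat.eq_dec d 0) as [->|Hd0]; [rewrite Nat.add_1_r; apply Hedge|].
  replace (i + S d)%nat with (S (i + d)) by lia.
  apply (det_pos_convex_step (X i) (X (S i)) (X (i + d)%nat) (X (S (i + d))));
    [apply IH; lia | apply Hedge | apply Hedge | ..]; rewrite <- Hanti.
  - replace (i + n)%nat with ((i + d) + (n - d))%nat by lia. apply Hconv. lia.
  - replace (i + d + n)%nat with (i + (d + n))%nat by lia. apply Hconv. lia.
  - replace (S (i + d) + n)%nat with (i + (S d + n))%nat by lia. apply Hconv. lia.
Qed.

Lemma det_vdir_turn (A B C D E : pt) : det A B > 0 -> det B C > 0 -> det D E > 0 ->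
  det (psub C B) (psub A B) > 0 -> det (psub E D) (psub B D) > 0 ->
  det (psub (vdir B C) (vdir A B)) (psub (vdir D E) (vdir A B)) > 0.
Proof.
  destruct A as [a1 a2], B as [b1 b2], C as [c1 c2], D as [d1 d2], E as [e1 e2].
  unfold vdir, det, psub, pscale; simpl. intros h1 h2 h3 h4 h5.
  match goal with |- ?l > 0 => replace l with
    (((c1 - b1) * (a2 - b2) - (c2 - b2) * (a1 - b1))
     * ((e1 - d1) * (b2 - d2) - (e2 - d2) * (b1 - d1))
     / ((a1 * b2 - a2 * b1) * (b1 * c2 - b2 * c1) * (d1 * e2 - d2 * e1)))
    by (field; repeat split; lra) end.
  apply Rdiv_lt_0_compat; [nra|]. repeat apply Rmult_lt_0_compat; lra.
Qed.

Lemma det_self (u : pt) : det u u = 0.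
Proof. destruct u; unfold det; simpl; ring. Qed.

Lemma det_pscale_l a (u v : pt) : det (pscale a u) v = a * det u v.
Proof. destruct u, v; unfold det, pscale; simpl; ring. Qed.

Lemma det_pscale_r a (u v : pt) : det u (pscale a v) = a * det u v.
Proof. destruct u, v; unfold det, pscale; simpl; ring. Qed.

Lemma decomp_along (A B X : pt) : det A B = 1 -> det B X = 0 -> X = pscale (det A X) B.
Proof.
  destruct A as [a1 a2], B as [b1 b2], X as [x1 x2]; unfold det, pscale; simpl; intros h1 h2.
  assert (I1 : x1 * (a1 * b2 - a2 * b1) - (a1 * x2 - a2 * x1) * b1 = - a1 * (b1 * x2 - b2 * x1))
    by ring.
  assert (I2 : x2 * (a1 * b2 - a2 * b1) - (a1 * x2 - a2 * x1) * b2 = - a2 * (b1 * x2 - b2 * x1))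
    by ring.
  rewrite h1, h2 in *. f_equal; lra.
Qed.

Lemma between_0_and (t L : R) : t * (t - L) <= 0 -> exists th, 0 <= th <= 1 /\ t = th * L.
Proof.
  intros H. destruct (Req_dec L 0) as [->|HL].
  - exists 0. split; [lra | nra].
  - exists (t / L). split; [|field; exact HL].
    assert (HL2 : 0 < L * L) by (destruct (Rlt_le_dec 0 L); nra).
    assert (E : t / L * (t / L - 1) * (L * L) = t * (t - L)) by (field; exact HL).
    assert (t / L * (t / L - 1) <= 0).
    { destruct (Rle_dec (t / L * (t / L - 1)) 0) as [|Hgt]; [assumption|nra]. }
    nra.
Qed.

(* [x] lies on the line [b + R v]; the sign condition says it is weakly on the
   same side of the lines [a + R w] and [b' + R u] through the neighbouring
   vertices, which confines it to the edge [b b']. *)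
Lemma segment_between_lines (w v u a b b' x : pt) (t La L : R) :
  psub x b = pscale t v -> psub b a = pscale La w -> psub b' b = pscale L v ->
  det w v > 0 -> det v u > 0 -> det w (psub x a) * det u (psub x b') >= 0 ->
  segment b b' x.
Proof.
  destruct w as [w1 w2], v as [v1 v2], u as [u1 u2], a as [a1 a2], b as [b1 b2],
    b' as [c1 c2], x as [x1 x2].
  unfold psub, pscale, det, segment, padd; simpl. intros Ex Eb Eb' Hwv Hvu Hsides.
  injection Ex as X1 X2. injection Eb as Y1 Y2. injection Eb' as Z1 Z2.
  assert (Ew : w1 * (x2 - a2) - w2 * (x1 - a1) = t * (w1 * v2 - w2 * v1)).
  { replace (x2 - a2) with ((x2 - b2) + (b2 - a2)) by ring.
    replace (x1 - a1) with ((x1 - b1) + (b1 - a1)) by ring. rewrite X1, X2, Y1, Y2. ring. }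
  assert (Eu : u1 * (x2 - c2) - u2 * (x1 - c1) = - (t - L) * (v1 * u2 - v2 * u1)).
  { replace (x2 - c2) with ((x2 - b2) - (c2 - b2)) by ring.
    replace (x1 - c1) with ((x1 - b1) - (c1 - b1)) by ring. rewrite X1, X2, Z1, Z2. ring. }
  rewrite Ew, Eu in Hsides.
  destruct (between_0_and t L) as [th [Hth Et]].
  { assert (0 < (w1 * v2 - w2 * v1) * (v1 * u2 - v2 * u1)) by (apply Rmult_lt_0_compat; lra).
    destruct (Rle_dec (t * (t - L)) 0) as [|Hgt]; [assumption|nra]. }
  exists th. split; [exact Hth|]. subst t. f_equal; nra.
Qed.

Lemma involute_edge_sides (Mi Mm Vi Vm Um z : pt) (L be th : R) :
  psub Mm Mi = pscale L Vi -> det Um Vi = 1 -> det Um Vm = 1 ->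
  z = padd (pscale (1 - th) (padd Mm (pscale be Vi))) (pscale th (padd Mm (pscale be Vm))) ->
  det Vi (psub z Mi) = be * th * det Vi Vm /\ det Vm (psub z Mm) = - be * (1 - th) * det Vi Vm /\
  det Um (psub z Mm) = be /\ (be = 0 -> z = Mm).
Proof.
  destruct Mi as [a1 a2], Mm as [b1 b2], Vi as [c1 c2], Vm as [d1 d2], Um as [u1 u2].
  unfold psub, pscale, padd, det; simpl. intros E h1 h2 ->. simpl.
  injection E as X1 X2. split; [|split; [|split]].
  - replace a1 with (b1 - L * c1) by lra. replace a2 with (b2 - L * c2) by lra. ring.
  - ring.
  - transitivity (be * ((1 - th) * (u1 * c2 - u2 * c1) + th * (u1 * d2 - u2 * d1))); [ring|].
    rewrite h1, h2; ring.
  - intros ->. f_equal; ring.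
Qed.

Lemma segment_left (A B : pt) : segment A B A.
Proof. exists 0. split; [lra|]. destruct A, B; unfold padd, pscale; simpl; f_equal; ring. Qed.

Lemma segment_degenerate (A y : pt) : segment A A y -> y = A.
Proof. intros [t [_ ->]]. destruct A; unfold padd, pscale; simpl; f_equal; ring. Qed.

Lemma polycurve_segment N (X : nat -> pt) k x : (N > 0)%nat -> periodic N X ->
  segment (X k) (X (S k)) x -> polycurve N X x.
Proof.
  intros HN HX Hs. exists (k mod N)%nat. split; [apply Nat.mod_upper_bound; lia|].
  rewrite (Nat.div_mod_eq k N), <- Nat.add_succ_r, Nat.mul_comm, !(periodic_mul_add N X HX) in Hs.
  exact Hs.
Qed.

Lemma padd_pscale_0 (x v : pt) : padd x (pscale 0 v) = x.
Proof. destruct x, v; unfold padd, pscale; simpl; f_equal; ring. Qed.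

Lemma pscale_1 (v : pt) : pscale 1 v = v.
Proof. destruct v; unfold pscale; simpl; f_equal; ring. Qed.

Lemma is_path_line (x v : pt) : is_path (fun t => padd x (pscale t v)).
Proof.
  assert (Hline : forall a b, continuity (fun t => a + t * b)).
  { intros a b. apply continuity_plus; [apply continuity_const; intros ? ?; reflexivity|].
    apply continuity_mult; [apply derivable_continuous, derivable_id|].
    apply continuity_const; intros ? ?; reflexivity. }
  split; apply Hline.
Qed.

(** * The sign index of the central equidistant *)

Section CentralEquidistant.
Variables (n : nat) (U P : nat -> pt) (c : R) (alpha : nat -> R).
Hypothesis n_ge2 : (2 <= n)%nat.
Hypothesis U_periodic : periodic (2 * n) U.
Hypothesis U_convex : forall i j, (i < 2 * n)%nat -> (j < 2 * n)%nat -> j <> i ->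
  j <> ((i + 1) mod (2 * n))%nat -> det (psub (U (S i)) (U i)) (psub (U j) (U i)) > 0.
Hypothesis U_antiperiodic : antiperiodic n U.
Hypothesis c_pos : 0 < c.
Hypothesis P_periodic : periodic (2 * n) P.
Hypothesis P_convex : forall i j, det (psub (P (S i)) (P i)) (psub (P j) (P i)) >= 0.
Hypothesis P_edges : forall i, exists a, 0 <= a /\ psub (P (S i)) (P i) = pscale a (Vdir U i).
Hypothesis P_width : forall i, psub (P i) (P (i + n)%nat) = pscale (2 * c) (U i).
Hypothesis M_edges : forall i,
  psub (Mpt n P (S i)) (Mpt n P i) = pscale (alpha i) (psub (U (S i)) (U i)).

Local Notation M := (Mpt n P).
Local Notation V := (Vdir U).

Lemma U_ccw_convex : ccw_convex (2 * n) U.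
Proof.
  intros k d Hd. set (r := (k mod (2 * n))%nat).
  assert (Hr : (r < 2 * n)%nat) by (apply Nat.mod_upper_bound; lia).
  assert (Hreduce : forall j, U (k + j)%nat = U (r + j)%nat).
  { intros j. rewrite (Nat.div_mod_eq k (2 * n)), Nat.mul_comm, <- Nat.add_assoc.
    apply periodic_mul_add, U_periodic. }
  assert (E0 := Hreduce 0%nat). assert (E1 := Hreduce 1%nat).
  rewrite !Nat.add_0_r, !Nat.add_1_r in *. rewrite E0, E1, (Hreduce d).
  clearbody r. clear Hreduce E0 E1.
  assert (Hnext : ((r + 1) mod (2 * n) = r + 1 \/ (r + 1) mod (2 * n) = 0 /\ r + 1 = 2 * n)%nat).
  { destruct (Nat.lt_ge_cases (r + 1) (2 * n)) as [Hlt|Hge].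
    - left. apply Nat.mod_small, Hlt.
    - right. replace (r + 1)%nat with (2 * n)%nat by lia.
      split; [apply Nat.Div0.mod_same | reflexivity]. }
  destruct (Nat.lt_ge_cases (r + d) (2 * n)) as [Hlt|Hge].
  - apply U_convex; [lia | lia | lia |]. destruct Hnext as [E|[E _]]; rewrite E; lia.
  - replace (r + d)%nat with ((r + d - 2 * n) + 2 * n)%nat by lia. rewrite U_periodic.
    apply U_convex; [lia | lia | lia |]. destruct Hnext as [E|[E E']]; rewrite E; lia.
Qed.

Lemma det_U_succ_pos k : det (U k) (U (S k)) > 0.
Proof. apply det_pos_of_antipode_left. rewrite <- U_antiperiodic. apply U_ccw_convex. lia. Qed.

Lemma det_U_V k : det (U k) (V k) = 1.
Proof.
  assert (Hd := det_U_succ_pos k). unfold Vdir.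
  destruct (U k), (U (S k)). unfold det, psub, pscale in *; simpl in *. field. lra.
Qed.

Lemma det_U_succ_V k : det (U (S k)) (V k) = 1.
Proof.
  assert (Hd := det_U_succ_pos k). unfold Vdir.
  destruct (U k), (U (S k)). unfold det, psub, pscale in *; simpl in *. field. lra.
Qed.

Lemma V_periodic : periodic (2 * n) V.
Proof.
  intros k. unfold Vdir. rewrite U_periodic.
  replace (S (k + 2 * n)) with (S k + 2 * n)%nat by lia. rewrite U_periodic. reflexivity.
Qed.

Lemma V_antiperiodic : antiperiodic n V.
Proof.
  intros k. unfold Vdir. replace (S (k + n)) with (S k + n)%nat by lia. rewrite !U_antiperiodic.
  assert (Hd := det_U_succ_pos k).
  destruct (U k) as [a1 a2], (U (S k)) as [b1 b2]. unfold det, psub, pscale in *; simpl in *.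
  f_equal; field; lra.
Qed.

Lemma V_ccw_convex : ccw_convex (2 * n) V.
Proof.
  intros k d Hd. apply det_vdir_turn; try apply det_U_succ_pos.
  - assert (Hc := U_ccw_convex (S k) (2 * n - 1)%nat ltac:(lia)).
    replace (S k + (2 * n - 1))%nat with (k + 2 * n)%nat in Hc by lia.
    rewrite U_periodic in Hc. exact Hc.
  - assert (Hc := U_ccw_convex (k + d)%nat (2 * n + 1 - d)%nat ltac:(lia)).
    replace (k + d + (2 * n + 1 - d))%nat with (S k + 2 * n)%nat in Hc by lia.
    rewrite U_periodic in Hc. exact Hc.
Qed.

Lemma det_V_pos i d : (1 <= d <= n - 1)%nat -> det (V i) (V (i + d)%nat) > 0.
Proof.
  apply antiperiodic_ccw_convex_det_pos; [exact n_ge2 | exact V_antiperiodic | exact V_ccw_convex].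
Qed.

Lemma M_half_periodic k : M (k + n) = M k.
Proof.
  unfold Mpt. replace (k + n + n)%nat with (k + 2 * n)%nat by lia. rewrite P_periodic.
  destruct (P k), (P (k + n)%nat). unfold padd, pscale; simpl. f_equal; ring.
Qed.

Lemma M_periodic : periodic (2 * n) M.
Proof.
  intros k. replace (k + 2 * n)%nat with (k + n + n)%nat by lia.
  rewrite !M_half_periodic. reflexivity.
Qed.

Lemma M_eq k : M k = psub (P k) (pscale c (U k)).
Proof.
  assert (E := P_width k). unfold Mpt. destruct (P k), (P (k + n)%nat), (U k).
  unfold psub, padd, pscale in *; simpl in *. injection E as E1 E2. f_equal; lra.
Qed.

Definition edge_coef (k : nat) : R := alpha k * det (U k) (U (S k)).

Lemma M_step k : psub (M (S k)) (M k) = pscale (edge_coef k) (V k).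
Proof.
  rewrite M_edges. assert (Hd := det_U_succ_pos k). unfold Vdir, edge_coef.
  destruct (U k), (U (S k)). unfold psub, pscale, det in *; simpl in *. f_equal; field; lra.
Qed.

Lemma edge_coef_antiperiodic k : edge_coef (k + n) = - edge_coef k.
Proof.
  assert (E := M_step (k + n)). replace (S (k + n)) with (S k + n)%nat in E by lia.
  rewrite !M_half_periodic, M_step, V_antiperiodic in E.
  assert (HUV := det_U_V k).
  destruct (V k) as [v1 v2], (U k) as [u1 u2]. unfold pscale, det in *; simpl in *.
  injection E as E1 E2. set (e := edge_coef k) in *. set (e' := edge_coef (k + n)) in *.
  assert (Z : (e + e') * (u1 * v2 - u2 * v1) = u1 * ((e + e') * v2) - u2 * ((e + e') * v1)) by ring.
  replace ((e + e') * v2) with 0 in Z by lra. replace ((e + e') * v1) with 0 in Z by lra.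
  rewrite HUV in Z. lra.
Qed.

Definition side (k : nat) (x : pt) : R := det (V k) (psub x (M k)).

Lemma side_periodic x : periodic (2 * n) (fun k => side k x).
Proof. intros k. unfold side. rewrite V_periodic, M_periodic. reflexivity. Qed.

Lemma side_mod k x : side k x = side (k mod (2 * n)) x.
Proof. apply (periodic_mod (2 * n) (fun k => side k x)); [lia | apply side_periodic]. Qed.

Lemma side_antiperiodic k x : side (k + n) x = - side k x.
Proof.
  unfold side. rewrite V_antiperiodic, M_half_periodic.
  destruct (V k), (M k), x. unfold det, psub, pscale; simpl; ring.
Qed.

(* A point of the line [M k + R V k] outside the edge [M k M (S k)] lies strictly
   beyond one of its ends, hence strictly on opposite sides of the two
   neighbouring lines. *)
Lemma side_zero_neighbours k x : side k x = 0 -> ~ polycurve (2 * n) M x ->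
  side (k + (2 * n - 1)) x * side (S k) x < 0.
Proof.
  intros Hz Hoff. destruct (Rlt_le_dec (side (k + (2 * n - 1)) x * side (S k) x) 0) as [|Hge];
    [assumption | exfalso; apply Hoff].
  apply (polycurve_segment (2 * n) M k); [lia | exact M_periodic |].
  set (j := (k + (2 * n - 1))%nat) in *.
  assert (Hj : S j = (k + 2 * n)%nat) by (unfold j; lia).
  apply (segment_between_lines (V j) (V k) (V (S k)) (M j) (M k) (M (S k)) x
           (det (U k) (psub x (M k))) (edge_coef j) (edge_coef k)).
  - apply decomp_along; [apply det_U_V | exact Hz].
  - rewrite <- (M_periodic k), <- Hj. apply M_step.
  - apply M_step.
  - rewrite <- (V_periodic k), <- Hj, <- Nat.add_1_r. apply det_V_pos. lia.
  - rewrite <- Nat.add_1_r. apply det_V_pos. lia.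
  - unfold side in Hge. lra.
Qed.

Definition sign_index (x : pt) : R := rsum (fun k => sgn (side k x) * sgn (side (S k) x)) (2 * n).

Lemma side_continuous g k : is_path g -> continuity (fun t => side k (g t)).
Proof.
  intros [Hx Hy]. unfold side, det, psub. destruct (V k) as [v1 v2], (M k) as [m1 m2]; simpl.
  assert (Hcst : forall a, continuity (fun _ : R => a))
    by (intros a; apply continuity_const; intros ? ?; reflexivity).
  apply (continuity_minus (fun t => v1 * (snd (g t) - m2)) (fun t => v2 * (fst (g t) - m1)));
    apply continuity_mult; try apply Hcst; apply continuity_minus; auto.
Qed.

Lemma sign_index_locally_constant g t : is_path g -> ~ polycurve (2 * n) M (g t) ->
  exists d, d > 0 /\ forall s, Rabs (s - t) < d -> sign_index (g s) = sign_index (g t).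
Proof.
  intros Hg Hoff.
  destruct (near_forall_lt (fun k s => side k (g t) <> 0 -> sgn (side k (g s)) = sgn (side k (g t)))
              t (2 * n)) as [d [Hd Hnear]].
  { intros k _. destruct (Req_dec (side k (g t)) 0) as [E|E].
    - exists 1; split; [lra|]. intros; contradiction.
    - destruct (continuity_pt_same_sign _ t (side_continuous g k Hg t) E) as [d [Hd H]].
      exists d; split; [exact Hd|]. intros s Hs _. apply sgn_eq_of_mul_pos, H, Hs. }
  exists d; split; [exact Hd|]. intros s Hs.
  assert (Hkeep : forall k, side k (g t) <> 0 -> sgn (side k (g s)) = sgn (side k (g t))).
  { intros k. rewrite (side_mod k (g s)), (side_mod k (g t)).
    apply Hnear; [exact Hs | apply Nat.mod_upper_bound; lia]. }
  apply (cyclic_products_isolated_zeros (2 * n) (fun k => sgn (side k (g t)))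
           (fun k => sgn (side k (g s))));
    [lia | intros k; cbn beta; rewrite side_periodic; reflexivity
         | intros k; cbn beta; rewrite side_periodic; reflexivity |].
  intros k _. destruct (Req_dec (side k (g t)) 0) as [E|E]; [right | left; apply Hkeep, E].
  assert (Hnb := side_zero_neighbours k (g t) E Hoff).
  split; [apply sgn_0, E|]. split; [apply sgn_add_of_mul_neg, Hnb|].
  apply Hkeep. intros E'. rewrite E' in Hnb. lra.
Qed.

Lemma sign_index_path_constant g : is_path g ->
  (forall t, 0 <= t <= 1 -> ~ polycurve (2 * n) M (g t)) ->
  forall t, 0 <= t <= 1 -> sign_index (g t) = sign_index (g 1).
Proof.
  intros Hg Hoff t Ht. apply (locally_constant_endpoints (fun s => sign_index (g s))); [lra|].
  intros u Hu. destruct (sign_index_locally_constant g u Hg (Hoff u ltac:(lra))) as [d [Hd H]].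
  exists d; split; [exact Hd|]. intros s _ Hs. apply H, Hs.
Qed.

Lemma sign_index_segment x v :
  (forall t, 0 <= t <= 1 -> ~ polycurve (2 * n) M (padd x (pscale t v))) ->
  sign_index x = sign_index (padd x (pscale 1 v)).
Proof.
  intros Hoff. rewrite <- (padd_pscale_0 x v) at 1.
  apply (sign_index_path_constant (fun t => padd x (pscale t v)));
    [apply is_path_line | exact Hoff | lra].
Qed.

(** * Points of the involute *)

Lemma beta_eq k : beta n U alpha k = / 2 * rsum (fun j => edge_coef (k + j)%nat) n.
Proof. reflexivity. Qed.

Lemma beta_step k : beta n U alpha k = beta n U alpha (S k) + edge_coef k.
Proof.
  rewrite !beta_eq.
  assert (E := rsum_shift (fun j => edge_coef (k + j)%nat) n).
  change (rsum ?f (S n)) with (rsum f n + f n) in E. cbn beta in E.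
  rewrite Nat.add_0_r, edge_coef_antiperiodic in E.
  replace (rsum (fun j => edge_coef (k + S j)%nat) n)
    with (rsum (fun j => edge_coef (S k + j)%nat) n) in E
    by (apply rsum_ext; intros; rewrite Nat.add_succ_r; reflexivity).
  lra.
Qed.

Lemma Npt_from_next k : Npt n U P alpha k = padd (M (S k)) (pscale (beta n U alpha (S k)) (V k)).
Proof.
  unfold Npt. rewrite beta_step. assert (E := M_step k).
  destruct (M k), (M (S k)), (V k). unfold psub, padd, pscale in *; simpl in *.
  injection E as E1 E2. f_equal; lra.
Qed.

Lemma side_weighted_step k z : det (U k) (U (S k)) * side k z =
  det (U (S k)) (psub z (M (S k))) - det (U k) (psub z (M k)) + edge_coef k.
Proof.
  unfold side, edge_coef. assert (E := M_edges k). assert (Hd := det_U_succ_pos k). unfold Vdir.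
  destruct (M k) as [m1 m2], (M (S k)) as [l1 l2], (U k) as [a1 a2], (U (S k)) as [b1 b2],
    z as [z1 z2].
  unfold psub, pscale, det in *; simpl in *. injection E as E1 E2.
  replace l1 with (m1 + alpha k * (b1 - a1)) by lra.
  replace l2 with (m2 + alpha k * (b2 - a2)) by lra.
  field. lra.
Qed.

(* Telescoping [side_weighted_step] over half a period; the boundary terms
   combine because [U (m + n) = - U m] and [M (m + n) = M m]. *)
Lemma rsum_weighted_sides m z :
  rsum (fun k => det (U (m + k)%nat) (U (S (m + k))) * side (m + k) z) n
  = 2 * (beta n U alpha m - det (U m) (psub z (M m))).
Proof.
  assert (Htele : forall p, rsum (fun k => det (U (m + k)%nat) (U (S (m + k))) * side (m + k) z) p
    = det (U (m + p)%nat) (psub z (M (m + p))) - det (U m) (psub z (M m))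
      + rsum (fun k => edge_coef (m + k)%nat) p).
  { induction p as [|p IH]; simpl; [rewrite Nat.add_0_r; ring|].
    rewrite IH, side_weighted_step, <- Nat.add_succ_r. ring. }
  rewrite Htele, U_antiperiodic, M_half_periodic, beta_eq.
  destruct (U m), (M m), z. unfold det, psub, pscale; simpl. field.
Qed.

Lemma sign_index_three_changes z p q r : (p < q)%nat -> (q < r)%nat -> (r < p + n)%nat ->
  side p z * side q z < 0 -> side q z * side r z < 0 -> sign_index z <= INR (2 * n) - 6.
Proof.
  intros Hpq Hqr Hrp H1 H2.
  apply (sign_products_three_changes n (fun k => sgn (side k z))) with (p := p) (q := q) (r := r);
    try (intros k; cbn beta); try assumption.
  - apply sgn_values.
  - rewrite side_periodic. reflexivity.
  - rewrite side_antiperiodic. apply sgn_opp.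
  - apply sgn_mul_neg, H1.
  - apply sgn_mul_neg, H2.
Qed.

Section InvolutePoint.
Variables (i : nat) (z : pt) (be th D : R).
Hypothesis z_off_M : ~ polycurve (2 * n) M z.
Hypothesis D_pos : D > 0.
Hypothesis be_sq_pos : be * be > 0.
Hypothesis side_here : side i z = be * th * D.
Hypothesis side_next : side (S i) z = - be * (1 - th) * D.
Hypothesis side_balance : forall k0, (k0 < n)%nat -> be * side (S i + k0) z < 0 ->
  exists k, (k < n)%nat /\ be * side (S i + k) z > 0.

Lemma side_half_turn : side (S i + (n - 1)) z = - side i z.
Proof. replace (S i + (n - 1))%nat with (i + n)%nat by lia. apply side_antiperiodic. Qed.

Lemma sign_index_involute_start : th = 0 -> sign_index z <= INR (2 * n) - 6.
Proof.
  intros ->. assert (Hi0 : side i z = 0) by (rewrite side_here; ring).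
  assert (Hnb := side_zero_neighbours i z Hi0 z_off_M).
  destruct (side_balance 0%nat) as [k [Hk Hpos]]; [lia | rewrite Nat.add_0_r, side_next; nra |].
  assert (k <> 0%nat) by (intros ->; rewrite Nat.add_0_r, side_next in Hpos; nra).
  assert (k <> n - 1)%nat by (intros ->; rewrite side_half_turn, Hi0 in Hpos; lra).
  assert (k <> n - 2)%nat.
  { intros ->. replace (S i + (n - 2))%nat with (i + n - 1)%nat in Hpos by lia.
    replace (i + (2 * n - 1))%nat with ((i + n - 1) + n)%nat in Hnb by lia.
    rewrite side_antiperiodic, side_next in Hnb. nra. }
  apply (sign_index_three_changes z (i + (2 * n - 1)) (S i + 2 * n) (S i + k + 2 * n));
    try lia; rewrite !side_periodic; [exact Hnb|].
  rewrite side_next. nra.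
Qed.

Lemma sign_index_involute_end : th = 1 -> sign_index z <= INR (2 * n) - 6.
Proof.
  intros ->. assert (Hm0 : side (S i) z = 0) by (rewrite side_next; ring).
  assert (Hnb := side_zero_neighbours (S i) z Hm0 z_off_M).
  replace (S i + (2 * n - 1))%nat with (i + 2 * n)%nat in Hnb by lia.
  rewrite side_periodic, side_here in Hnb.
  assert (Hafter : be * side (S (S i)) z < 0) by nra.
  destruct (side_balance 1%nat) as [k [Hk Hpos]]; [lia | rewrite Nat.add_1_r; exact Hafter |].
  assert (k <> 0%nat) by (intros ->; rewrite Nat.add_0_r, Hm0 in Hpos; lra).
  assert (k <> 1%nat) by (intros ->; rewrite Nat.add_1_r in Hpos; lra).
  assert (k <> n - 1)%nat by (intros ->; rewrite side_half_turn, side_here in Hpos; nra).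
  apply (sign_index_three_changes z i (S (S i)) (S i + k)); try lia.
  - rewrite side_here. nra.
  - assert (be * side (S (S i)) z * (be * side (S i + k) z) < 0) by nra. nra.
Qed.

Lemma sign_index_involute_interior : 0 < th < 1 -> sign_index z <= INR (2 * n) - 6.
Proof.
  intros Hth.
  assert (Hleft : 0 < th * D) by (apply Rmult_lt_0_compat; lra).
  assert (Hright : 0 < (1 - th) * D) by (apply Rmult_lt_0_compat; lra).
  destruct (side_balance 0%nat) as [k [Hk Hpos]]; [lia | rewrite Nat.add_0_r, side_next; nra |].
  assert (k <> 0%nat) by (intros ->; rewrite Nat.add_0_r, side_next in Hpos; nra).
  assert (k <> n - 1)%nat by (intros ->; rewrite side_half_turn, side_here in Hpos; nra).
  apply (sign_index_three_changes z i (S i) (S i + k)); try lia.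
  - rewrite side_here, side_next.
    assert (0 < be * be * (th * D) * ((1 - th) * D))
      by (apply Rmult_lt_0_compat; [apply Rmult_lt_0_compat|]; lra).
    nra.
  - rewrite side_next. nra.
Qed.

End InvolutePoint.

(* A point [z] of the edge [N (i) N (S i)] off [M] sees sides of opposite signs
   across the edge [M i M (S i)], while the vanishing weighted sum of
   [rsum_weighted_sides] forces a further change of sign within half a period. *)
Lemma sign_index_involute z : polycurve (2 * n) (Npt n U P alpha) z -> ~ polycurve (2 * n) M z ->
  sign_index z <= INR (2 * n) - 6.
Proof.
  intros [i [_ [th [Hth Ez]]]] Hoff.
  rewrite (Npt_from_next i) in Ez. unfold Npt in Ez.
  set (be := beta n U alpha (S i)) in *.
  destruct (involute_edge_sides (M i) (M (S i)) (V i) (V (S i)) (U (S i)) z (edge_coef i) be th)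
    as [Hi [Hm [Hbe_eq Hbe0]]]; [apply M_step | apply det_U_succ_V | apply det_U_V | exact Ez |].
  assert (HD : det (V i) (V (S i)) > 0) by (rewrite <- Nat.add_1_r; apply det_V_pos; lia).
  assert (Hbe : be * be > 0).
  { assert (be <> 0).
    { intros E0. apply Hoff, (polycurve_segment _ M (S i)); [lia | exact M_periodic |].
      rewrite (Hbe0 E0). apply segment_left. }
    destruct (Rlt_le_dec 0 be); nra. }
  assert (Hbalance : forall k0, (k0 < n)%nat -> be * side (S i + k0) z < 0 ->
                     exists k, (k < n)%nat /\ be * side (S i + k) z > 0).
  { intros k0 Hk0 Hneg.
    apply (exists_sign_of_weighted_sum_zero (fun k => det (U (S i + k)%nat) (U (S (S i + k))))
             (fun k => side (S i + k) z) n k0 be); try assumption.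
    - intros k _. apply det_U_succ_pos.
    - rewrite rsum_weighted_sides, Hbe_eq. unfold be. ring. }
  destruct (Req_dec th 0) as [T0|T0]; [|destruct (Req_dec th 1) as [T1|T1]].
  - exact (sign_index_involute_start i z be th _ Hoff HD Hbe Hi Hm Hbalance T0).
  - exact (sign_index_involute_end i z be th _ Hoff HD Hbe Hi Hm Hbalance T1).
  - exact (sign_index_involute_interior i z be th _ HD Hbe Hi Hm Hbalance ltac:(lra)).
Qed.

(** * Points of the boundary of P *)

Lemma side_affine k (A B : pt) th :
  side k (padd (pscale (1 - th) A) (pscale th B)) = (1 - th) * side k A + th * side k B.
Proof. unfold side. destruct (V k), (M k), A, B; unfold det, psub, padd, pscale; simpl; ring. Qed.

Lemma side_shift k x t v : side k (padd x (pscale t v)) = side k x + t * det (V k) v.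
Proof. unfold side. destruct (V k), (M k), x, v; unfold det, psub, padd, pscale; simpl; ring. Qed.

Lemma side_Mpt j k : side j (M k) = / 2 * (side j (P k) + side j (P (k + n)%nat)).
Proof.
  unfold side, Mpt. destruct (V j), (M j), (P k), (P (k + n)%nat).
  unfold det, psub, padd, pscale; simpl; field.
Qed.

Lemma side_eq_P j x : side j x = det (V j) (psub x (P j)) - c.
Proof.
  unfold side. rewrite M_eq. assert (E := det_U_V j).
  destruct (V j), (P j), (U j), x; unfold det, psub, pscale in *; simpl in *. nra.
Qed.

Lemma side_P_edge j y : segment (P j) (P (S j)) y -> side j y = - c.
Proof.
  intros [th [_ ->]]. destruct (P_edges j) as [a [_ Ea]].
  rewrite side_affine, !side_eq_P, Ea.
  replace (psub (P j) (P j)) with ((0, 0) : pt)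
    by (destruct (P j); unfold psub; simpl; f_equal; ring).
  destruct (V j); unfold det, pscale; simpl; ring.
Qed.

Lemma side_P_ge j m : P (S j) <> P j -> side j (P m) >= - c.
Proof.
  intros Hne. rewrite side_eq_P. destruct (P_edges j) as [a [Ha Ea]].
  assert (Hpos : a > 0).
  { destruct (Req_dec a 0) as [->|]; [|lra]. exfalso. apply Hne.
    destruct (P (S j)), (P j), (V j). unfold psub, pscale in Ea; simpl in Ea.
    injection Ea as E1 E2. f_equal; lra. }
  assert (E := P_convex j m). rewrite Ea, det_pscale_l in E.
  assert (det (V j) (psub (P m) (P j)) >= 0); [|lra].
  destruct (Rle_dec 0 (det (V j) (psub (P m) (P j)))); [lra | nra].
Qed.

Lemma side_M_ge j w : P (S j) <> P j -> polycurve (2 * n) M w -> side j w >= - c.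
Proof.
  intros Hne [k [_ [th [Hth ->]]]]. rewrite side_affine, !side_Mpt.
  assert (H1 := side_P_ge j k Hne). assert (H2 := side_P_ge j (k + n) Hne).
  assert (H3 := side_P_ge j (S k) Hne). assert (H4 := side_P_ge j (S k + n) Hne).
  nra.
Qed.

(* [P] cannot collapse to a point since its width [2c] is positive. *)
Lemma P_proper_edge y : polycurve (2 * n) P y ->
  exists j, segment (P j) (P (S j)) y /\ P (S j) <> P j.
Proof.
  intros [i [_ Hs]]. apply NNPP. intros Hnone.
  assert (Hy : y = P i).
  { destruct (classic (P (S i) = P i)) as [E|E].
    - rewrite E in Hs. apply segment_degenerate, Hs.
    - exfalso. apply Hnone. exists i. split; assumption. }
  assert (Hconst : forall m, P (i + m)%nat = P i).
  { induction m as [|m IH]; [rewrite Nat.add_0_r; reflexivity|].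
    rewrite Nat.add_succ_r. apply NNPP. intros E. apply Hnone. exists (i + m)%nat.
    split; [rewrite IH, <- Hy; apply segment_left | rewrite IH; exact E]. }
  assert (E := P_width i). rewrite Hconst in E. assert (Hd := det_U_succ_pos i).
  destruct (P i), (U i) as [u1 u2], (U (S i)). unfold psub, pscale, det in *; simpl in *.
  injection E as E1 E2.
  assert (u1 = 0) by nra. assert (u2 = 0) by nra. subst. lra.
Qed.

Lemma sides_negative_far j x : side j x < 0 ->
  exists far, forall d, (d < n)%nat -> side (j + d) (padd x (pscale far (V j))) < 0.
Proof.
  intros Hx.
  exists (rsum (fun d => (Rabs (side (j + S d) x) + 1) / det (V j) (V (j + S d)%nat)) (n - 1)).
  set (far := rsum _ (n - 1)). intros d Hd. rewrite side_shift.
  destruct d as [|d].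
  - rewrite Nat.add_0_r, det_self. lra.
  - assert (HD : det (V j) (V (j + S d)%nat) > 0) by (apply det_V_pos; lia).
    assert (Hterm : (Rabs (side (j + S d) x) + 1) / det (V j) (V (j + S d)%nat) <= far).
    { apply (rsum_ge_term (fun d => (Rabs (side (j + S d) x) + 1) / det (V j) (V (j + S d)%nat))
               (n - 1) d); [|lia].
      intros k Hk. apply Rlt_le, Rdiv_lt_0_compat; [|apply det_V_pos; lia].
      assert (0 <= Rabs (side (j + S k) x)) by apply Rabs_pos. lra. }
    apply (Rmult_le_compat_r (det (V j) (V (j + S d)%nat))) in Hterm; [|lra].
    unfold Rdiv in Hterm. rewrite Rmult_assoc, Rinv_l in Hterm by lra.
    assert (side (j + S d) x <= Rabs (side (j + S d) x)) by apply Rle_abs.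
    replace (det (V (j + S d)) (V j)) with (- det (V j) (V (j + S d)%nat))
      by (destruct (V j), (V (j + S d)%nat); unfold det; simpl; ring).
    nra.
Qed.

Lemma sign_index_beyond_edge j x : P (S j) <> P j -> side j x < - c ->
  sign_index x = INR (2 * n) - 4.
Proof.
  intros Hne Hx. destruct (sides_negative_far j x ltac:(lra)) as [far Hneg].
  rewrite (sign_index_segment x (pscale far (V j))), pscale_1.
  - apply (sign_products_half_block n (fun k => sgn (side k (padd x (pscale far (V j))))))
      with (j := j);
      try (intros k; cbn beta); try lia.
    + rewrite side_periodic. reflexivity.
    + rewrite side_antiperiodic. apply sgn_opp.
    + intros Hk. apply sgn_neg, Hneg, Hk.
  - intros t Ht Hon. apply (side_M_ge j) in Hon; [|exact Hne].
    rewrite side_shift, det_pscale_r, det_self in Hon. lra.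
Qed.

Lemma sign_index_boundary y : polycurve (2 * n) P y -> ~ polycurve (2 * n) M y ->
  sign_index y = INR (2 * n) - 4.
Proof.
  intros Hy Hoff. destruct (P_proper_edge y Hy) as [j [Hs Hne]].
  assert (HVU : det (V j) (U j) = -1).
  { assert (E := det_U_V j). destruct (V j), (U j); unfold det in *; simpl in *; lra. }
  rewrite (sign_index_segment y (U j)).
  - apply (sign_index_beyond_edge j); [exact Hne|].
    rewrite side_shift, side_P_edge, HVU by exact Hs. lra.
  - intros t Ht Hon.
    destruct (Req_dec t 0) as [->|Ht0]; [rewrite padd_pscale_0 in Hon; contradiction|].
    apply (side_M_ge j) in Hon; [|exact Hne].
    rewrite side_shift, side_P_edge, HVU in Hon by exact Hs. lra.
Qed.

Lemma involute_in_region x :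
  polycurve (2 * n) (Npt n U P alpha) x \/
  region (polycurve (2 * n) (Npt n U P alpha)) (polycurve (2 * n) P) x ->
  region (polycurve (2 * n) M) (polycurve (2 * n) P) x.
Proof.
  intros Hx [g [Hg [Hg0 [Hg1 Hoff]]]].
  assert (Hindex : forall t, 0 <= t <= 1 -> sign_index (g t) = INR (2 * n) - 4).
  { intros t Ht. rewrite (sign_index_path_constant g Hg Hoff t Ht).
    apply sign_index_boundary; [exact Hg1 | apply Hoff; lra]. }
  assert (HoffN : forall t, 0 <= t <= 1 -> ~ polycurve (2 * n) (Npt n U P alpha) (g t)).
  { intros t Ht HN. assert (Hle := sign_index_involute (g t) HN (Hoff t Ht)).
    rewrite Hindex in Hle by exact Ht. lra. }
  destruct Hx as [HN|Hreg].
  - apply (HoffN 0); [lra | rewrite Hg0; exact HN].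
  - apply Hreg. exists g. exact (conj Hg (conj Hg0 (conj Hg1 HoffN))).
Qed.

End CentralEquidistant.

Theorem proposition4p3 (n : nat) (U P : nat -> pt) (c : R) (alpha : nat -> R) :
  (2 <= n)%nat ->
  (forall i, U (i + 2 * n)%nat = U i) ->
  (forall i j, (i < 2 * n)%nat -> (j < 2 * n)%nat -> i <> j -> U i <> U j) ->
  (forall i j, (i < 2 * n)%nat -> (j < 2 * n)%nat -> j <> i ->
     j <> ((i + 1) mod (2 * n))%nat ->
     det (psub (U (S i)) (U i)) (psub (U j) (U i)) > 0) ->
  (forall i, U (i + n)%nat = pscale (-1) (U i)) ->
  0 < c ->
  (forall i, P (i + 2 * n)%nat = P i) ->
  (forall i j, det (psub (P (S i)) (P i)) (psub (P j) (P i)) >= 0) ->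
  (exists y, forall i, P (S i) <> P i ->
     det (psub (P (S i)) (P i)) (psub y (P i)) > 0) ->
  (forall i, exists a, 0 <= a /\ psub (P (S i)) (P i) = pscale a (Vdir U i)) ->
  (forall i, psub (P i) (P (i + n)%nat) = pscale (2 * c) (U i)) ->
  (forall i, psub (Mpt n P (S i)) (Mpt n P i) = pscale (alpha i) (psub (U (S i)) (U i))) ->
  forall x : pt,
    (polycurve (2 * n) (Npt n U P alpha) x \/
     region (polycurve (2 * n) (Npt n U P alpha)) (polycurve (2 * n) P) x) ->
    region (polycurve (2 * n) (Mpt n P)) (polycurve (2 * n) P) x.
Proof.
  intros Hn HUper _ HUconv HUanti Hc HPper HPconv _ HPedges HPwidth HMedges.
  exact (involute_in_region n U P c alpha Hn HUper HUconv HUanti Hc HPper HPconv HPedges HPwidth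
           HMedges).
Qed.
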